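(* Let $\psi\in\mathcal C$, let $F_1,F_2:\mathbb R\to(0,\infty)$ be measurable with $I(F_1\circ\psi,\psi),I(F_2\circ\psi^*,\psi^* )\in(0,\infty)$, and assume $F_2\circ\psi^*\in\mathcal L_{\psi^*}$. Then for $p\in(0,\infty)$ and $f=e^{-\psi}$, $$G_{p,F_1,F_2}(\psi)\le[I(F_1\circ\psi,\psi)]^{\frac{n}{n+p}}[I(F_2\circ\psi^*,\psi^* )]^{\frac{p}{n+p}},\qquad G_p(f)\le[I(f)]^{\frac{n}{n+p}}[I(f^\circ)]^{\frac{p}{n+p}}.$$ For $p\in(-\infty,-n)\cup(-n,0)$ the same inequalities hold with $\le$ replaced by $\ge$.
   Context: $\mathcal C$ is the set of convex $\psi:\mathbb R^n\to\mathbb R\cup\{+\infty\}$ with domain of nonempty interior; $\psi^*(y)=\sup_x(\langle x,y\rangle-\psi(x))$; $\nabla^2\psi$ is the Alexandrov Hessian; $X_\psi=\{x:\psi(x)<\infty,\ \nabla^2\psi(x)\text{ exists and is invertible}\}$. $I(F\circ\psi,\psi)=\int_{X_\psi}F(\psi(x))dx$, $I(g,\psi^* )=\int_{X_{\psi^*}}g$; $\mathcal F^+_{\psi^*}$: integrable $g>0$ on $X_{\psi^*}$ with $0<I(g,\psi^* )<\infty$; $\mathcal L_{\psi^*}$: its log-concave members. For $-n\ne p\in\mathbb R$ and $g\in\mathcal F^+_{\psi^*}$, $V_{p,F_1,F_2}(\psi,g)=\int_{X_\psi}\big(\frac{F_2(\langle x,\nabla\psi(x)\rangle-\psi(x))}{g(\nabla\psi(x))}\big)^{p/n}F_1(\psi(x))dx$.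 The general $L_p$ geominimal surface area is $G_{p,F_1,F_2}(\psi)=\inf_{g\in\mathcal L_{\psi^*}}\{V_{p,F_1,F_2}(\psi,g)^{\frac{n}{n+p}}I(g,\psi^* )^{\frac{p}{n+p}}\}$ for $p\ge0$, and the same with $\sup$ for $-n\ne p<0$. For $f=e^{-\psi}$: $G_p(f)=G_{p,e^{-t},e^{-t}}(\psi)$, $f^\circ=e^{-\psi^*}$, $I(f)=\int_{X_\psi}f$, $I(f^\circ)=\int_{X_{\psi^*}}f^\circ$ (assumed in $(0,\infty)$). Standing assumption: all integrals are well defined. *)

(* R : realType, R^n rendered as 'rV[R]_n for the
   geometry and as n.-tuple R (with its product sigma-algebra) for integration. *)
From HB Require Import structures.
From mathcomp Require Import all_boot all_order all_algebra.
From mathcomp Require Import all_classical all_reals all_analysis.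
Set Implicit Arguments.
Unset Strict Implicit.
Unset Printing Implicit Defensive.
Import Order.TTheory GRing.Theory Num.Theory.
Import numFieldNormedType.Exports.
Local Open Scope classical_set_scope.
Local Open Scope ring_scope.

Definition dotv {R : realType} {n : nat} (x y : 'rV[R]_n) : R :=
  \sum_(i < n) x ord0 i * y ord0 i.

Definition convex_ext {R : realType} {n : nat} (phi : 'rV[R]_n -> \bar R) : Prop :=
  (forall x, phi x != -oo%E) /\
  forall (x y : 'rV[R]_n) (t : R), 0 < t < 1 ->
    (phi ((1 - t) *: x + t *: y)%R <= (1 - t)%:E * phi x + t%:E * phi y)%E.

Definition classC {R : realType} {n : nat} (psi : 'rV[R]_n -> \bar R) : Prop :=
  convex_ext psi /\
  exists (x : 'rV[R]_n) (r : R), 0 < r /\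
    forall y, `|y - x| < r -> (psi y < +oo)%E.

Definition legendre {R : realType} {n : nat} (psi : 'rV[R]_n -> \bar R)
  (y : 'rV[R]_n) : \bar R :=
  ereal_sup [set ((dotv x y)%:E - psi x)%E | x in [set: 'rV[R]_n]].

Definition alex_expansion {R : realType} {n : nat} (psi : 'rV[R]_n -> \bar R)
  (x v : 'rV[R]_n) (A : 'M[R]_n) : Prop :=
  A^T = A /\ psi x \is a fin_num /\
  forall e : R, 0 < e -> exists2 d : R, 0 < d &
    forall y : 'rV[R]_n, `|y - x| < d ->
      exists2 r : R, psi y = r%:E &
        `| r - fine (psi x) - dotv v (y - x)
             - 2^-1 * ((y - x) *m A *m (y - x)^T) ord0 ord0 |
          <= e * `|y - x| ^+ 2.

Definition Xset {R : realType} {n : nat} (psi : 'rV[R]_n -> \bar R) : set 'rV[R]_n :=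
  [set x | (psi x < +oo)%E /\
           exists v A, alex_expansion psi x v A /\ A \in unitmx].

(* gradient (from the Alexandrov expansion, unique when it exists) *)
Definition grad {R : realType} {n : nat} (psi : 'rV[R]_n -> \bar R)
  (x : 'rV[R]_n) : 'rV[R]_n :=
  xget 0 [set v | exists A, alex_expansion psi x v A].

Definition rowt {R : realType} {n : nat} (t : n.-tuple R) : 'rV[R]_n :=
  \row_(i < n) tnth t i.

(* mu is Lebesgue measure on R^n: its value on every box is the product of
   the side lengths (this determines the Borel measure uniquely). *)
Definition is_lebesgue_n {R : realType} {n : nat}
  (mu : {measure set (n.-tuple R) -> \bar R}) : Prop :=
  forall a b : n.-tuple R, (forall i, tnth a i <= tnth b i) ->
    mu [set t | forall i, tnth a i < tnth t i <= tnth b i] =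
    (\prod_(i < n) (tnth b i - tnth a i))%:E.

Definition Iover {R : realType} {n : nat}
  (mu : {measure set (n.-tuple R) -> \bar R}) (X : set 'rV[R]_n)
  (h : 'rV[R]_n -> R) : \bar R :=
  (\int[mu]_(t in [set t | X (rowt t)]) (h (rowt t))%:E)%E.

Definition LC {R : realType} {n : nat}
  (mu : {measure set (n.-tuple R) -> \bar R}) (psi : 'rV[R]_n -> \bar R)
  (g : 'rV[R]_n -> R) : Prop :=
  (forall y, Xset (legendre psi) y -> 0 < g y) /\
  mu.-integrable [set t | Xset (legendre psi) (rowt t)] (fun t => (g (rowt t))%:E) /\
  (0 < Iover mu (Xset (legendre psi)) g < +oo)%E /\
  exists phi : 'rV[R]_n -> \bar R, convex_ext phi /\
    forall y, Xset (legendre psi) y -> phi y = (- ln (g y))%:E.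

Definition Vp {R : realType} {n : nat}
  (mu : {measure set (n.-tuple R) -> \bar R}) (p : R) (F1 F2 : R -> R)
  (psi : 'rV[R]_n -> \bar R) (g : 'rV[R]_n -> R) : \bar R :=
  Iover mu (Xset psi) (fun x =>
    ((F2 (dotv x (grad psi x) - fine (psi x)) / g (grad psi x)) `^ (p / n%:R))
    * F1 (fine (psi x))).

Definition Gp {R : realType} {n : nat}
  (mu : {measure set (n.-tuple R) -> \bar R}) (p : R) (F1 F2 : R -> R)
  (psi : 'rV[R]_n -> \bar R) : \bar R :=
  let S := [set (Vp mu p F1 F2 psi g `^ (n%:R / (n%:R + p))
                 * Iover mu (Xset (legendre psi)) g `^ (p / (n%:R + p)))%E
           | g in LC mu psi] in
  if 0 <= p then ereal_inf S else ereal_sup S.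

Definition expm {R : realType} (t : R) : R := expR (- t).

From HB Require Import structures.
From mathcomp Require Import all_boot all_order all_algebra.
From mathcomp Require Import all_classical all_reals all_analysis.
From mathcomp Require Import ring lra measurable_realfun.
Import Order.TTheory GRing.Theory Num.Theory.
Import numFieldNormedType.Exports.
Local Open Scope classical_set_scope.
Local Open Scope ring_scope.

(* At a point x of X_psi with Alexandrov gradient v, convexity keeps psi above
   its tangent plane at x, so the supremum defining psi^*(v) is attained at x:
   psi^*(v) = <x, v> - psi(x).  Hence for g = F2 o psi^* the quotient inside
   V_{p,F1,F2}(psi, g) is identically 1 and V_{p,F1,F2}(psi, g) = I(F1 o psi, psi);
   using g as a competitor in the infimum (p > 0) or the supremum (p < 0)
   defining G_{p,F1,F2} gives both inequalities.  For F1 = F2 = e^{-t} the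
   competitor e^{-psi^*} is log-concave because psi^* is convex, and measurable
   because psi^* is lower semicontinuous. *)

Section inner_product.
Context {R : realType} {n : nat}.
Implicit Types (x y v : 'rV[R]_n) (a b : R).

Lemma dotvC x y : dotv x y = dotv y x.
Proof. by apply: eq_bigr => i _; rewrite mulrC. Qed.

Lemma dotvDZr v x y a b :
  dotv v (a *: x + b *: y) = a * dotv v x + b * dotv v y.
Proof.
rewrite /dotv !mulr_sumr -big_split; apply: eq_bigr => i _; rewrite !mxE /=; ring.
Qed.

Lemma dotvZr v x a : dotv v (a *: x) = a * dotv v x.
Proof. by rewrite -[a *: x]addr0 -(scale0r x) dotvDZr mul0r addr0. Qed.

Lemma dotvBr v x y : dotv v (x - y) = dotv v x - dotv v y.
Proof. by rewrite -[x]scale1r -scaleN1r dotvDZr scale1r; ring. Qed.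

Lemma quadformZ (A : 'M[R]_n) x a :
  ((a *: x) *m A *m (a *: x)^T) ord0 ord0 = a * a * (x *m A *m x^T) ord0 ord0.
Proof. by rewrite linearZ /= -!scalemxAl -scalemxAr scalerA mxE. Qed.

End inner_product.

Section alexandrov_expansion.
Context {R : realType} {n : nat} {psi : 'rV[R]_n -> \bar R}.
Context {x v : 'rV[R]_n} {A : 'M[R]_n}.
Hypothesis psi_exp : alex_expansion psi x v A.

Let quad (h : 'rV[R]_n) : R := (h *m A *m h^T) ord0 ord0.

Lemma alex_expansion_lower_bound : exists2 d : R, 0 < d &
  forall (h : 'rV[R]_n) (t : R), 0 < t -> t * `|h| < d ->
    exists2 r : R, psi (x + t *: h) = r%:E &
      fine (psi x) + t * dotv v h - t ^+ 2 * (`|h| ^+ 2 + `|quad h|) <= r.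
Proof.
have [_ [_ ex]] := psi_exp.
have [d d0 near_x] := ex 1 ltr01.
exists d => // h t t0 th.
have xth : x + t *: h - x = t *: h by rewrite addrAC subrr add0r.
have [|r psi_r r_near] := near_x (x + t *: h); first by rewrite xth normrZ gtr0_norm.
exists r => //; move: r_near.
rewrite xth dotvZr quadformZ normrZ gtr0_norm // mul1r ler_norml => /andP[r_ge _].
rewrite /quad; move: r_ge; rewrite !exprMn expr2.
set q : R := (h *m A *m h^T) ord0 ord0 => r_ge.
have tt0 : 0 <= t * t by rewrite -expr2 exprn_ge0 // ltW.
have : 0 <= t * t * (q + `|q|).
  by rewrite mulr_ge0 //; have := ler_norm (- q); rewrite normrN; lra.
have : 0 <= t * t * `|q| by rewrite mulr_ge0.
lra.
Qed.

Hypothesis psi_cvx : convex_ext psi.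

Lemma alex_expansion_subgradient (y : 'rV[R]_n) :
  ((fine (psi x) + dotv v (y - x))%:E <= psi y)%E.
Proof.
have [ninf cvx] := psi_cvx.
case psi_y: (psi y) => [b| |]; [|exact: leey|by move: (ninf y); rewrite psi_y].
have psi_x : psi x = (fine (psi x))%:E by case: psi_exp => _ [/fineK].
set a := fine (psi x) in psi_x *; set h := y - x.
rewrite lee_fin leNgt; apply/negP => gap.
have [d d0 lower] := alex_expansion_lower_bound.
set S := `|h| ^+ 2 + `|quad h|.
have S0 : 0 <= S by rewrite addr_ge0 // exprn_ge0.
pose c := a + dotv v h - b.
have c0 : 0 < c by rewrite /c; lra.
have [t [t0 t1 td tc]] : exists t, [/\ 0 < t, t < 1, t * `|h| < d & t * S < c].
  pose t := Num.min (2^-1) (Num.min (d / (`|h| + 1)) (c / (S + 1))).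
  have hd : 0 < d / (`|h| + 1) by rewrite divr_gt0 //; lra.
  have hc : 0 < c / (S + 1) by rewrite divr_gt0 //; lra.
  have t0 : 0 < t by rewrite /t !lt_min hd hc andbT; lra.
  exists t; split => //.
  - have : t <= 2^-1 by rewrite /t ge_min lexx.
    lra.
  - have h0 := normr_ge0 h.
    have : t <= d / (`|h| + 1) by rewrite /t !ge_min lexx orbT.
    by rewrite ler_pdivlMr; lra.
  - have : t <= c / (S + 1) by rewrite /t !ge_min lexx !orbT.
    by rewrite ler_pdivlMr; lra.
have [r psi_z] := lower h t t0 td; rewrite -/a -/S expr2 => lower_r.
have := cvx x y t; rewrite t0 t1 => /(_ isT).
have -> : (1 - t) *: x + t *: y = x + t *: h.
  by apply/rowP => i; rewrite /h !mxE; ring.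
rewrite psi_z psi_x psi_y -!EFinM -EFinD lee_fin => upper.
have : t * c <= t * (t * S) by rewrite /c; lra.
by rewrite ler_pM2l //; lra.
Qed.

Lemma legendre_alex_gradient :
  legendre psi v = (dotv x v - fine (psi x))%:E.
Proof.
have psi_x : psi x = (fine (psi x))%:E by case: psi_exp => _ [/fineK].
apply/eqP; rewrite eq_le; apply/andP; split.
- apply: ge_ereal_sup => _ [z _ <-].
  have := alex_expansion_subgradient z; case: (psi z) => [c| |].
  + rewrite lee_fin dotvBr -EFinB lee_fin (dotvC z v) (dotvC x v); lra.
  + by rewrite /= leNye.
  + by rewrite leeNy_eq.
- by apply: ereal_sup_ubound; exists x => //; rewrite {1}psi_x -EFinB.
Qed.

End alexandrov_expansion.

Lemma legendre_convex {R : realType} {n : nat} (psi : 'rV[R]_n -> \bar R)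
    (x0 : 'rV[R]_n) :
  (forall x, psi x != -oo%E) -> (psi x0 < +oo)%E -> convex_ext (legendre psi).
Proof.
move=> ninf x0_dom.
have fx0 : psi x0 \is a fin_num by rewrite fin_numE ninf /= lt_eqF.
have affine_le (x y : 'rV[R]_n) c : psi x = c%:E ->
    ((dotv x y - c)%:E <= legendre psi y)%E.
  by move=> psi_x; apply: ereal_sup_ubound; exists x => //; rewrite psi_x EFinB.
split=> [y|y z t /andP[t0 t1]].
  apply/negP => /eqP Ly.
  by have := affine_le x0 y _ (esym (fineK fx0)); rewrite Ly leeNy_eq.
apply: ge_ereal_sup => _ [x _ <-].
have := ninf x; case psi_x: (psi x) => [c| |] // _; last by rewrite /= leNye.
apply: le_trans (leeD (lee_wpmul2l _ (affine_le x y c psi_x))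
                      (lee_wpmul2l _ (affine_le x z c psi_x))); last 2 first.
- by rewrite lee_fin; lra.
- by rewrite lee_fin; lra.
by rewrite -!EFinM -EFinD lee_fin dotvDZr; lra.
Qed.

Section geominimal_candidate.
Context {R : realType} {n : nat}.
Variable mu : {measure set (n.-tuple R) -> \bar R}.

Lemma Xset_grad (psi : 'rV[R]_n -> \bar R) x :
  Xset psi x -> exists A, alex_expansion psi x (grad psi x) A.
Proof.
move=> [_ [v [A [expA _]]]].
exact: (xgetPex 0 (P := [set v | exists A, alex_expansion psi x v A])
          (ex_intro _ v (ex_intro _ A expA))).
Qed.

Lemma Vp_legendre (p : R) (F1 F2 : R -> R) (psi : 'rV[R]_n -> \bar R) :
  convex_ext psi -> (forall t, 0 < F2 t) ->
  Vp mu p F1 F2 psi (fun y => F2 (fine (legendre psi y))) =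
  Iover mu (Xset psi) (fun x => F1 (fine (psi x))).
Proof.
move=> psi_cvx F2_gt0; apply: eq_integral => t; rewrite inE => /Xset_grad[A expA].
rewrite (legendre_alex_gradient expA psi_cvx) /= divff ?gt_eqF //.
by rewrite powR1 mul1r.
Qed.

Lemma Gp_le_candidate (p : R) (F1 F2 : R -> R) (psi : 'rV[R]_n -> \bar R)
    (g : 'rV[R]_n -> R) :
  0 <= p -> LC mu psi g ->
  (Gp mu p F1 F2 psi <= Vp mu p F1 F2 psi g `^ (n%:R / (n%:R + p))
     * Iover mu (Xset (legendre psi)) g `^ (p / (n%:R + p)))%E.
Proof. by move=> p0 LCg; rewrite /Gp p0; apply: ereal_inf_lbound; exists g. Qed.

Lemma Gp_ge_candidate (p : R) (F1 F2 : R -> R) (psi : 'rV[R]_n -> \bar R)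
    (g : 'rV[R]_n -> R) :
  p < 0 -> LC mu psi g ->
  (Vp mu p F1 F2 psi g `^ (n%:R / (n%:R + p))
     * Iover mu (Xset (legendre psi)) g `^ (p / (n%:R + p)) <= Gp mu p F1 F2 psi)%E.
Proof.
move=> p0 LCg; rewrite /Gp ifF; last by apply/negbTE; rewrite -ltNge.
by apply: ereal_sup_ubound; exists g.
Qed.

End geominimal_candidate.

Section legendre_measurable.
Context {R : realType} {n : nat}.

Definition rat_box (q : n.-tuple rat) (r : rat) : set (n.-tuple R) :=
  [set t | forall j, `|tnth t j - ratr (tnth q j)| < ratr r].

Lemma measurable_rat_box q r : measurable (rat_box q r).
Proof.
have -> : rat_box q r = \bigcap_(j in [set: 'I_n]) ((fun t => tnth t j) @^-1`
    `](ratr (tnth q j) - ratr r), (ratr (tnth q j) + ratr r)[%classic).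
  apply/seteqP; split => t /= bt.
  - by move=> j _; rewrite /= in_itv /= -ltr_distlC distrC.
  - by move=> j; have := bt j I; rewrite /= in_itv /= -ltr_distlC distrC.
apply: fin_bigcap_measurable; first exact: finite_finset.
move=> j _; rewrite -[X in measurable X]setTI.
exact: (measurable_tnth j measurableT (measurable_itv _)).
Qed.

Lemma measurable_rat_box_cover (O : set (n.-tuple R)) :
  (forall t, O t -> exists q r, rat_box q r t /\ rat_box q r `<=` O) ->
  measurable O.
Proof.
move=> cover.
have -> : O = \bigcup_(i : n.-tuple rat * rat)
    (rat_box i.1 i.2 `&` [set _ | rat_box i.1 i.2 `<=` O]).
  apply/seteqP; split => t; last by move=> [[q r] _ [bt sO]]; exact: sO.
  by move=> /cover[q [r [bt sO]]]; exists (q, r).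
apply: countable_bigcupT_measurable; first exact: countableP.
move=> [q r] /=; apply: measurableI; first exact: measurable_rat_box.
have [sO|nsO] := pselect (rat_box q r `<=` O).
- by rewrite (_ : [set _ | _] = setT) //; apply/seteqP; split.
- by rewrite (_ : [set _ | _] = set0) //; apply/seteqP; split.
Qed.

Lemma dotv_rowt_dist_le (x : 'rV[R]_n) (s t : n.-tuple R) (e : R) :
  (forall j, `|tnth s j - tnth t j| <= e) ->
  `|dotv x (rowt s) - dotv x (rowt t)| <= (\sum_(j < n) `|x ord0 j|) * e.
Proof.
move=> st; rewrite -dotvBr /dotv mulr_suml.
apply: le_trans (ler_norm_sum _ _ _) _; apply: ler_sum => j _.
by rewrite !mxE normrM ler_wpM2l.
Qed.

Variable psi : 'rV[R]_n -> \bar R.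
Hypothesis psi_ninf : forall x, psi x != -oo%E.

Lemma legendre_superlevel_rat_box (a : R) (t : n.-tuple R) :
  (a%:E < legendre psi (rowt t))%E -> exists q r, rat_box q r t /\
    rat_box q r `<=` [set s | (a%:E < legendre psi (rowt s))%E].
Proof.
move=> /ereal_sup_gt[_ [x _ <-]].
have := psi_ninf x; case psi_x: (psi x) => [c| |] // _.
rewrite -EFinB lte_fin => a_lt.
set M := \sum_(j < n) `|x ord0 j|.
have M0 : 0 <= M by rewrite sumr_ge0.
set eps := dotv x (rowt t) - c - a.
have eps0 : 0 < eps by rewrite /eps; lra.
have [r] : exists r : rat, ratr r \in `]0, eps / (2 * (M + 1))[.
  by apply: rat_in_itvoo; rewrite divr_gt0 //; lra.
rewrite in_itv /= => /andP[r0 r_lt].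
have near_t j : exists q : rat, `|tnth t j - ratr q| < ratr r.
  have [|qj] := @rat_in_itvoo R (tnth t j - ratr r) (tnth t j + ratr r); first lra.
  by rewrite in_itv /= -ltr_distlC; exists qj.
have [qf qfP] := choice near_t.
exists [tuple qf j | j < n], r; split=> [j|s bs /=]; first by rewrite tnth_mktuple.
apply: (@lt_le_trans _ _ ((dotv x (rowt s))%:E - psi x)%E); last first.
  by apply: ereal_sup_ubound; exists x.
rewrite psi_x -EFinB lte_fin.
have st j : `|tnth s j - tnth t j| <= 2 * ratr r.
  have := bs j; have := qfP j; rewrite tnth_mktuple => tq sq.
  have := ler_distD (ratr (qf j)) (tnth s j) (tnth t j).
  by rewrite (distrC (ratr (qf j))); lra.
have := dotv_rowt_dist_le x _ _ _ st; rewrite -/M ler_norml => /andP[dist_ge _].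
have : M * (2 * ratr r) < eps by move: r_lt; rewrite ltr_pdivlMr; nra.
by rewrite /eps in dist_ge *; lra.
Qed.

Lemma measurable_fine_legendre :
  (forall y, legendre psi y != -oo%E) ->
  measurable_fun [set t | Xset (legendre psi) (rowt t)]
    (fun t => fine (legendre psi (rowt t))).
Proof.
move=> L_ninf mD; apply: (measurability _ (RGenOInfty.measurableE R)) => //.
move=> _ [_ [a ->] <-]; rewrite setIC.
have -> : (fun t => fine (legendre psi (rowt t))) @^-1` `]a, +oo[ `&`
     [set t | Xset (legendre psi) (rowt t)] =
   [set t | (a%:E < legendre psi (rowt t))%E] `&` [set t | Xset (legendre psi) (rowt t)].
  apply/seteqP; split => t /= [at_lt [L_fin Xt]]; split => //;
    have fL : legendre psi (rowt t) \is a fin_num by rewrite fin_numE L_ninf lt_eqF.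
  - by move: at_lt; rewrite in_itv /= andbT -lte_fin fineK.
  - by rewrite in_itv /= andbT -lte_fin fineK.
apply: measurableI => //; apply: measurable_rat_box_cover => t.
exact: legendre_superlevel_rat_box.
Qed.

End legendre_measurable.

Lemma LC_expm_legendre {R : realType} {n : nat}
    (mu : {measure set (n.-tuple R) -> \bar R}) (psi : 'rV[R]_n -> \bar R) :
  classC psi ->
  (0 < Iover mu (Xset (legendre psi)) (fun y => expm (fine (legendre psi y))) < +oo)%E ->
  LC mu psi (fun y => expm (fine (legendre psi y))).
Proof.
move=> [[psi_ninf _] [x0 [r [r0 dom]]]] /andP[I_gt0 I_lt].
have L_cvx : convex_ext (legendre psi).
  by apply: (legendre_convex psi x0) => //; apply: dom; rewrite subrr normr0.
have [L_ninf _] := L_cvx.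
split; [by move=> y _; exact: expR_gt0 | split; [|split]].
- apply/integrableP; split.
    have expm_meas : measurable_fun [set: R] (@expm R) :=
      measurableT_comp (@measurable_expR R)
        (measurable_funN (@measurable_id _ _ [set: R])).
    apply/measurable_EFinP.
    exact: (measurableT_comp expm_meas (measurable_fine_legendre psi psi_ninf L_ninf)).
  apply: le_lt_trans I_lt; rewrite le_eqVlt; apply/orP; left; apply/eqP.
  by apply: eq_integral => t _; rewrite /= ger0_norm // expR_ge0.
- by rewrite I_gt0.
- exists (legendre psi); split => // y [Ly _].
  have fL : legendre psi y \is a fin_num by rewrite fin_numE L_ninf lt_eqF.
  by rewrite /expm expRK opprK fineK.
Qed.

Theorem proposition2p2 (R : realType) (n : nat)
  (mu : {measure set (n.-tuple R) -> \bar R})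
  (psi : 'rV[R]_n -> \bar R) (F1 F2 : R -> R) :
  (0 < n)%N -> is_lebesgue_n mu -> classC psi ->
  (forall t, 0 < F1 t) -> (forall t, 0 < F2 t) ->
  measurable_fun [set: R] F1 -> measurable_fun [set: R] F2 ->
  (0 < Iover mu (Xset psi) (fun x => F1 (fine (psi x))) < +oo)%E ->
  (0 < Iover mu (Xset (legendre psi)) (fun y => F2 (fine (legendre psi y))) < +oo)%E ->
  LC mu psi (fun y => F2 (fine (legendre psi y))) ->
  (0 < Iover mu (Xset psi) (fun x => expm (fine (psi x))) < +oo)%E ->
  (0 < Iover mu (Xset (legendre psi)) (fun y => expm (fine (legendre psi y))) < +oo)%E ->
  (forall p : R, 0 < p ->
     (Gp mu p F1 F2 psi <=
        Iover mu (Xset psi) (fun x => F1 (fine (psi x))) `^ (n%:R / (n%:R + p))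
      * Iover mu (Xset (legendre psi)) (fun y => F2 (fine (legendre psi y)))
          `^ (p / (n%:R + p)))%E /\
     (Gp mu p expm expm psi <=
        Iover mu (Xset psi) (fun x => expm (fine (psi x))) `^ (n%:R / (n%:R + p))
      * Iover mu (Xset (legendre psi)) (fun y => expm (fine (legendre psi y)))
          `^ (p / (n%:R + p)))%E) /\
  (forall p : R, p < 0 -> p != - n%:R ->
     (Iover mu (Xset psi) (fun x => F1 (fine (psi x))) `^ (n%:R / (n%:R + p))
      * Iover mu (Xset (legendre psi)) (fun y => F2 (fine (legendre psi y)))
          `^ (p / (n%:R + p)) <= Gp mu p F1 F2 psi)%E /\
     (Iover mu (Xset psi) (fun x => expm (fine (psi x))) `^ (n%:R / (n%:R + p))
      * Iover mu (Xset (legendre psi)) (fun y => expm (fine (legendre psi y)))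
          `^ (p / (n%:R + p)) <= Gp mu p expm expm psi)%E).
Proof.
move=> _ _ psi_C _ F2_gt0 _ _ _ _ LC_F2 _ I_expm.
have psi_cvx := psi_C.1.
have expm_gt0 (t : R) : 0 < expm t by exact: expR_gt0.
have LC_expm := LC_expm_legendre mu psi psi_C I_expm.
have V_F := Vp_legendre mu _ F1 F2 psi psi_cvx F2_gt0.
have V_expm := Vp_legendre mu _ expm expm psi psi_cvx expm_gt0.
split=> p p_gt0; [|move=> _]; split.
- by rewrite -(V_F p); apply: Gp_le_candidate => //; exact: ltW.
- by rewrite -(V_expm p); apply: Gp_le_candidate => //; exact: ltW.
- by rewrite -(V_F p); exact: Gp_ge_candidate.
- by rewrite -(V_expm p); exact: Gp_ge_candidate.
Qed.
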